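(* Let $\zeta:Q_0\to Q_1$ be a homomorphism between injective right $R$-modules and $T=\operatorname{Ker}(\zeta)$. (1) If $T$ is partial cosilting (with respect to some injective copresentation), then $({}^{\circ}T,\operatorname{Cogen}(T))$ is a torsion pair in $\mathrm{Mod}\text{-}R$. (2) $T$ is cosilting with respect to $\zeta$ if and only if $({}^{\circ}T,\mathcal{B}_\zeta)$ is a torsion pair. (3) If $T$ is cosilting, then $\operatorname{Cogen}(T)=\operatorname{Copres}(T)$.
   Context: All modules are right modules over a unital associative ring $R$. For $\zeta:Q_0\to Q_1$, $\mathcal{B}_\zeta=\{X \mid \operatorname{Hom}_R(X,\zeta) \text{ is an epimorphism}\}$. ${}^{\circ}T=\{X\mid\operatorname{Hom}_R(X,T)=0\}$; $\operatorname{Cogen}(T)$ is the class of modules embeddable in a direct product of copies of $T$; $\operatorname{Copres}(T)$ is the class of modules isomorphic to kernels of homomorphisms between direct products of copies of $T$. An injective copresentation of $T$ is an exact sequence $0\to T\to Q_0\xrightarrow{\zeta}Q_1$ with $Q_0,Q_1$ injective. $T$ is partial cosilting with respect to $\zeta$ if $0\to T\to Q_0\xrightarrow{\zeta}Q_1$ is an injective copresentation, $T\in\mathcal{B}_\zeta$, and $\mathcal{B}_\zeta$ is closed under direct products; $T$ is cosilting with respect to $\zeta$ if $0\to T\to Q_0\xrightarrow{\zeta}Q_1$ is an injective copresentation and $\operatorname{Cogen}(T)=\mathcal{B}_\zeta$; $T$ is (partial) cosilting if it is so with respect to some injective copresentation. *)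

(* Right R-modules are modelled as left modules over the
   converse ring R^c, i.e. as [lmodType R^c]; homomorphisms of right
   R-modules are the [{linear M -> N}] maps. *)
From HB Require Import structures.
From mathcomp Require Import all_boot all_order all_algebra.
From Stdlib Require Import ClassicalDescription ClassicalEpsilon FunctionalExtensionality.
Set Implicit Arguments. Unset Strict Implicit. Unset Printing Implicit Defensive.
Import GRing.Theory.
Local Open Scope ring_scope.

(* ---------- classical eqType / choiceType structures (needed to put an
   lmodType structure on arbitrary direct products) ---------- *)
Definition cdec_eq (T : Type) (x y : T) : bool :=
  if excluded_middle_informative (x = y) then true else false.

Lemma cdec_eqP (T : Type) : Equality.axiom (@cdec_eq T).
Proof.
move=> x y; rewrite /cdec_eq; case: excluded_middle_informative => h.
  by constructor. by constructor.
Qed.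

Definition cfind (T : Type) (P : pred T) (n : nat) : option T :=
  match excluded_middle_informative (exists x, P x) with
  | left h => Some (proj1_sig (constructive_indefinite_description _ h))
  | right _ => None
  end.

Lemma cfind_correct (T : Type) (P : pred T) n x : cfind P n = Some x -> P x.
Proof.
rewrite /cfind; case: excluded_middle_informative => // h [<-].
exact: proj2_sig (constructive_indefinite_description _ h).
Qed.

Lemma cfind_complete (T : Type) (P : pred T) :
  (exists x, P x) -> exists n, cfind P n.
Proof.
by move=> h; exists 0%N; rewrite /cfind; case: excluded_middle_informative.
Qed.

Lemma cfind_ext (T : Type) (P Q : pred T) : P =1 Q -> cfind P =1 cfind Q.
Proof.
by move=> /functional_extensionality PQ n; rewrite PQ.
Qed.

Section DProd.
Variables (R : pzRingType) (I : Type) (M : I -> lmodType R).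

Definition dprod : Type := forall i, M i.

HB.instance Definition _ := hasDecEq.Build dprod (@cdec_eqP dprod).
HB.instance Definition _ :=
  hasChoice.Build dprod (@cfind_correct dprod) (@cfind_complete dprod)
    (@cfind_ext dprod).

Definition dp_zero : dprod := fun i => 0.
Definition dp_opp (x : dprod) : dprod := fun i => - x i.
Definition dp_add (x y : dprod) : dprod := fun i => x i + y i.
Definition dp_scale (a : R) (x : dprod) : dprod := fun i => a *: x i.

Lemma dp_addA : associative dp_add.
Proof. by move=> x y z; apply: functional_extensionality_dep => i; exact: addrA. Qed.
Lemma dp_addC : commutative dp_add.
Proof. by move=> x y; apply: functional_extensionality_dep => i; exact: addrC. Qed.
Lemma dp_add0 : left_id dp_zero dp_add.
Proof. by move=> x; apply: functional_extensionality_dep => i; exact: add0r. Qed.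
Lemma dp_addN : left_inverse dp_zero dp_opp dp_add.
Proof. by move=> x; apply: functional_extensionality_dep => i; exact: addNr. Qed.

HB.instance Definition _ := GRing.isZmodule.Build dprod dp_addA dp_addC dp_add0 dp_addN.

Lemma dp_scaleA a b v : dp_scale a (dp_scale b v) = dp_scale (a * b) v.
Proof. by apply: functional_extensionality_dep => i; exact: scalerA. Qed.
Lemma dp_scale1 : left_id 1 dp_scale.
Proof. by move=> x; apply: functional_extensionality_dep => i; exact: scale1r. Qed.
Lemma dp_scaleDr : right_distributive dp_scale +%R.
Proof. by move=> a x y; apply: functional_extensionality_dep => i; exact: scalerDr. Qed.
Lemma dp_scaleDl v : {morph dp_scale^~ v : a b / a + b}.
Proof. by move=> a b; apply: functional_extensionality_dep => i; exact: scalerDl. Qed.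

HB.instance Definition _ :=
  GRing.Zmodule_isLmodule.Build R dprod dp_scaleA dp_scale1 dp_scaleDr dp_scaleDl.

Definition dp_proj (i : I) (x : dprod) : M i := x i.
End DProd.

Section Modules.
Variable R : nzRingType.
Local Notation Mod := (lmodType R^c).

Definition power (I : Type) (T : Mod) : Mod := dprod (fun _ : I => T).

Definition mclass := Mod -> Prop.

Definition hom_zero (X Y : Mod) : Prop :=
  forall f : {linear X -> Y}, forall x, f x = 0.

Definition injective_module (Q : Mod) : Prop :=
  forall (A B : Mod) (f : {linear A -> B}) (g : {linear A -> Q}),
    injective f -> exists h : {linear B -> Q}, forall a, h (f a) = g a.

Definition exact_copres (T Q0 Q1 : Mod) (iota : {linear T -> Q0})
    (zeta : {linear Q0 -> Q1}) : Prop :=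
  injective iota /\ (forall q, zeta q = 0 <-> exists t, iota t = q).

Definition inj_copres (T Q0 Q1 : Mod) (zeta : {linear Q0 -> Q1}) : Prop :=
  [/\ injective_module Q0, injective_module Q1 &
      exists iota : {linear T -> Q0}, exact_copres iota zeta].

(* B_zeta = { X | Hom_R(X, zeta) is an epimorphism } *)
Definition B_class (Q0 Q1 : Mod) (zeta : {linear Q0 -> Q1}) : mclass :=
  fun X => forall g : {linear X -> Q1},
    exists h : {linear X -> Q0}, forall x, zeta (h x) = g x.

Definition perpL (T : Mod) : mclass := fun X => hom_zero X T.

Definition Cogen (T : Mod) : mclass := fun X =>
  exists (I : Type) (f : {linear X -> power I T}), injective f.

Definition Copres (T : Mod) : mclass := fun X =>
  exists (I J : Type) (g : {linear power I T -> power J T})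
         (f : {linear X -> power I T}),
    injective f /\ (forall y, g y = 0 <-> exists x, f x = y).

Definition closed_under_products (C : mclass) : Prop :=
  forall (I : Type) (M : I -> Mod), (forall i, C (M i)) -> C (dprod M).

Definition torsion_pair (Tc Fc : mclass) : Prop :=
  (forall X, Tc X <-> (forall Y, Fc Y -> hom_zero X Y)) /\
  (forall Y, Fc Y <-> (forall X, Tc X -> hom_zero X Y)).

Definition partial_cosilting_wrt (T Q0 Q1 : Mod) (zeta : {linear Q0 -> Q1}) : Prop :=
  [/\ inj_copres T zeta, B_class zeta T & closed_under_products (B_class zeta)].

Definition cosilting_wrt (T Q0 Q1 : Mod) (zeta : {linear Q0 -> Q1}) : Prop :=
  inj_copres T zeta /\ (forall X, Cogen T X <-> B_class zeta X).

Definition partial_cosilting (T : Mod) : Prop :=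
  exists (Q0 Q1 : Mod) (zeta : {linear Q0 -> Q1}), partial_cosilting_wrt T zeta.

Definition cosilting (T : Mod) : Prop :=
  exists (Q0 Q1 : Mod) (zeta : {linear Q0 -> Q1}), cosilting_wrt T zeta.
End Modules.

From HB Require Import structures.
From mathcomp Require Import all_boot all_order all_algebra.
From Stdlib Require Import ClassicalEpsilon FunctionalExtensionality ProofIrrelevance PropExtensionality.
Set Implicit Arguments. Unset Strict Implicit. Unset Printing Implicit Defensive.
Import GRing.Theory.
Local Open Scope ring_scope.

(* Everything rests on one fact: if Cogen(T) is contained in B_zeta, then every
   Y with Hom(^oT, Y) = 0 is cogenerated by T.  Let K be the reject of T in Y and
   pi : Y -> Y/K.  Since Y/K is cogenerated by T it lies in B_zeta, so for
   f : K -> T and an extension g : Y -> Q0 of iota f we find v with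
   g - v pi = iota w for some w : Y -> T.  Both w and pi vanish on K, hence so
   does iota f: K lies in ^oT, so K = 0.  For (3), the same lifting shows that the
   cokernel of the evaluation X -> T^Hom(X,T) lies in B_zeta = Cogen(T), which
   exhibits X as a kernel of a map between products of copies of T. *)

Section LinearMaps.
Variables (S : pzRingType) (U V : lmodType S).

Definition linmap (f : U -> V) (fL : linear f) : {linear U -> V} :=
  HB.pack f (GRing.isLinear.Build S U V *:%R f fL).

End LinearMaps.

Section DprodProj.
Variables (S : pzRingType) (I : Type) (M : I -> lmodType S).

Lemma dp_proj_is_linear (i : I) : linear (@dp_proj S I M i).
Proof. by []. Qed.

HB.instance Definition _ (i : I) :=
  GRing.isLinear.Build S (dprod M) (M i) *:%R (@dp_proj S I M i) (dp_proj_is_linear i).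

Lemma dprod_eq0 (y : dprod M) : (forall i, @dp_proj S I M i y = 0) -> y = 0.
Proof. exact: functional_extensionality_dep. Qed.

End DprodProj.

Section Submodule.
Variables (S : pzRingType) (M : lmodType S).

Record submodule := Submodule {
  submem : M -> Prop;
  submem0 : submem 0;
  submemP : forall a x y, submem x -> submem y -> submem (a *: x + y) }.

Variable N : submodule.

Lemma submemD x y : submem N x -> submem N y -> submem N (x + y).
Proof. by move=> Nx Ny; have := submemP 1 Nx Ny; rewrite scale1r. Qed.

Lemma submemZ a x : submem N x -> submem N (a *: x).
Proof. by move=> Nx; have := submemP a Nx (submem0 N); rewrite addr0. Qed.

Lemma submemN x : submem N x -> submem N (- x).
Proof. by move=> /(submemZ (-1)); rewrite scaleN1r. Qed.

Lemma submemB x y : submem N x -> submem N y -> submem N (x - y).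
Proof. by move=> Nx /submemN; apply: submemD. Qed.

Definition subm : Type := {x : M | submem N x}.

HB.instance Definition _ := hasDecEq.Build subm (@cdec_eqP subm).
HB.instance Definition _ :=
  hasChoice.Build subm (@cfind_correct subm) (@cfind_complete subm) (@cfind_ext subm).

Definition subm_val (u : subm) : M := proj1_sig u.

Lemma subm_val_inj : injective subm_val.
Proof. by apply: eq_sig_hprop => x p q; apply: proof_irrelevance. Qed.

Definition subm_zero : subm := exist _ 0 (submem0 N).
Definition subm_opp (u : subm) : subm := exist _ _ (submemN (proj2_sig u)).
Definition subm_add (u v : subm) : subm :=
  exist _ _ (submemD (proj2_sig u) (proj2_sig v)).
Definition subm_scale a (u : subm) : subm := exist _ _ (submemZ a (proj2_sig u)).

Lemma subm_addA : associative subm_add.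
Proof. by move=> u v w; apply: subm_val_inj; apply: addrA. Qed.
Lemma subm_addC : commutative subm_add.
Proof. by move=> u v; apply: subm_val_inj; apply: addrC. Qed.
Lemma subm_add0 : left_id subm_zero subm_add.
Proof. by move=> u; apply: subm_val_inj; apply: add0r. Qed.
Lemma subm_addN : left_inverse subm_zero subm_opp subm_add.
Proof. by move=> u; apply: subm_val_inj; apply: addNr. Qed.

HB.instance Definition _ :=
  GRing.isZmodule.Build subm subm_addA subm_addC subm_add0 subm_addN.

Lemma subm_scaleA a b u : subm_scale a (subm_scale b u) = subm_scale (a * b) u.
Proof. by apply: subm_val_inj; apply: scalerA. Qed.
Lemma subm_scale1 : left_id 1 subm_scale.
Proof. by move=> u; apply: subm_val_inj; apply: scale1r. Qed.
Lemma subm_scaleDr : right_distributive subm_scale +%R.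
Proof. by move=> a u v; apply: subm_val_inj; apply: scalerDr. Qed.
Lemma subm_scaleDl u : {morph subm_scale^~ u : a b / a + b}.
Proof. by move=> a b; apply: subm_val_inj; apply: scalerDl. Qed.

HB.instance Definition _ := GRing.Zmodule_isLmodule.Build S subm
  subm_scaleA subm_scale1 subm_scaleDr subm_scaleDl.

Lemma subm_val_is_linear : linear subm_val.
Proof. by []. Qed.

HB.instance Definition _ :=
  GRing.isLinear.Build S subm M *:%R subm_val subm_val_is_linear.

Lemma subm_valP u : submem N (subm_val u).
Proof. exact: proj2_sig. Qed.

End Submodule.

Section Quotient.
Variables (S : pzRingType) (M : lmodType S) (N : submodule M).

(* Cosets as predicates on M: this needs no decidability of membership in N. *)
Definition coset (m : M) : M -> Prop := fun z => submem N (z - m).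

Definition quot : Type := {A : M -> Prop | exists m, A = coset m}.

HB.instance Definition _ := hasDecEq.Build quot (@cdec_eqP quot).
HB.instance Definition _ :=
  hasChoice.Build quot (@cfind_correct quot) (@cfind_complete quot) (@cfind_ext quot).

Definition qpi (m : M) : quot := exist _ (coset m) (ex_intro _ m erefl).

Definition qrep (u : quot) : M :=
  proj1_sig (constructive_indefinite_description _ (proj2_sig u)).

Lemma qrepK : cancel qrep qpi.
Proof.
move=> [A hA]; apply: eq_sig_hprop => [B p q|]; first exact: proof_irrelevance.
by rewrite /qrep /=; case: constructive_indefinite_description => m /= ->.
Qed.

Lemma qpi_surj (u : quot) : exists m, qpi m = u.
Proof. by exists (qrep u); apply: qrepK. Qed.

Lemma eq_qpi x y : (qpi x = qpi y) <-> submem N (x - y).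
Proof.
split=> [/(congr1 (@proj1_sig _ _)) /= exy|Nxy].
  have : coset y y by rewrite /coset subrr; apply: submem0.
  by rewrite -exy /coset => /submemN; rewrite opprB.
apply: eq_sig_hprop => [B p q|]; first exact: proof_irrelevance.
apply: functional_extensionality => z; apply: propositional_extensionality.
rewrite /= /coset; have -> : z - y = (z - x) + (x - y) by rewrite addrA subrK.
split=> [Nzx|Nzy]; first exact: submemD.
by have := submemB Nzy Nxy; rewrite addrK.
Qed.

Lemma qrepP x : submem N (qrep (qpi x) - x).
Proof. by apply/eq_qpi; rewrite qrepK. Qed.

Definition quot_zero : quot := qpi 0.
Definition quot_opp (u : quot) : quot := qpi (- qrep u).
Definition quot_add (u v : quot) : quot := qpi (qrep u + qrep v).
Definition quot_scale a (u : quot) : quot := qpi (a *: qrep u).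

Lemma quot_oppE x : quot_opp (qpi x) = qpi (- x).
Proof. by apply/eq_qpi; rewrite -opprD; apply/submemN/qrepP. Qed.
Lemma quot_addE x y : quot_add (qpi x) (qpi y) = qpi (x + y).
Proof. by apply/eq_qpi; rewrite opprD addrACA; apply: submemD; apply: qrepP. Qed.
Lemma quot_scaleE a x : quot_scale a (qpi x) = qpi (a *: x).
Proof. by apply/eq_qpi; rewrite -scalerBr; apply/submemZ/qrepP. Qed.

Lemma quot_addA : associative quot_add.
Proof.
move=> u v w; rewrite -(qrepK u) -(qrepK v) -(qrepK w).
by rewrite !quot_addE addrA.
Qed.
Lemma quot_addC : commutative quot_add.
Proof. by move=> u v; rewrite -(qrepK u) -(qrepK v) !quot_addE addrC. Qed.
Lemma quot_add0 : left_id quot_zero quot_add.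
Proof. by move=> u; rewrite -(qrepK u) quot_addE add0r. Qed.
Lemma quot_addN : left_inverse quot_zero quot_opp quot_add.
Proof. by move=> u; rewrite -(qrepK u) quot_oppE quot_addE addNr. Qed.

HB.instance Definition _ :=
  GRing.isZmodule.Build quot quot_addA quot_addC quot_add0 quot_addN.

Lemma quot_scaleA a b u : quot_scale a (quot_scale b u) = quot_scale (a * b) u.
Proof. by rewrite -(qrepK u) !quot_scaleE scalerA. Qed.
Lemma quot_scale1 : left_id 1 quot_scale.
Proof. by move=> u; rewrite -(qrepK u) quot_scaleE scale1r. Qed.
Lemma quot_scaleDr : right_distributive quot_scale quot_add.
Proof.
move=> a u v; rewrite -(qrepK u) -(qrepK v).
by rewrite !(quot_addE, quot_scaleE) scalerDr.
Qed.
Lemma quot_scaleDl u : {morph quot_scale^~ u : a b / a + b >-> quot_add a b}.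
Proof. by move=> a b; rewrite -(qrepK u) !quot_scaleE quot_addE scalerDl. Qed.

HB.instance Definition _ := GRing.Zmodule_isLmodule.Build S quot
  quot_scaleA quot_scale1 quot_scaleDr quot_scaleDl.

Lemma qpi_is_linear : linear qpi.
Proof. by move=> a x y; rewrite -quot_addE -quot_scaleE. Qed.

HB.instance Definition _ := GRing.isLinear.Build S M quot *:%R qpi qpi_is_linear.

Lemma qpi_eq0 x : qpi x = 0 <-> submem N x.
Proof. by rewrite -[0]/(qpi 0) eq_qpi subr0. Qed.

Section QuotLift.
Variables (B : lmodType S) (g : {linear M -> B}).
Hypothesis gN : forall x, submem N x -> g x = 0.

Definition quot_lift_fun (u : quot) : B := g (qrep u).

Lemma quot_lift_funE x : quot_lift_fun (qpi x) = g x.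
Proof. by apply/eqP; rewrite -subr_eq0 -linearB gN //; apply: qrepP. Qed.

Lemma quot_lift_is_linear : linear quot_lift_fun.
Proof.
move=> a u v; have [x <-] := qpi_surj u; have [y <-] := qpi_surj v.
by rewrite -linearP !quot_lift_funE linearP.
Qed.

Definition quot_lift : {linear quot -> B} := linmap quot_lift_is_linear.

Lemma quot_liftE x : quot_lift (qpi x) = g x.
Proof. exact: quot_lift_funE. Qed.

End QuotLift.
End Quotient.

Definition lin_image (S : pzRingType) (A B : lmodType S) (f : {linear A -> B}) :
  submodule B.
Proof.
refine (@Submodule S B (fun y => exists x, f x = y) _ _).
  by exists 0; rewrite linear0.
by move=> a _ _ [x <-] [y <-]; exists (a *: x + y); rewrite linearP.
Defined.

Definition ev_map (R : nzRingType) (T X : lmodType R^c) (x : X) :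
  power {linear X -> T} T := fun u => u x.
Arguments ev_map {R} T X.

Section Cogenerated.
Variable R : nzRingType.
Local Notation Mod := (lmodType R^c).

Definition rperp (C : mclass R) : mclass R := fun Y => forall X, C X -> hom_zero X Y.

Lemma ev_map_is_linear (T X : Mod) : linear (ev_map T X).
Proof.
by move=> a x y; apply: functional_extensionality_dep => u; rewrite /ev_map linearP.
Qed.

HB.instance Definition _ (T X : Mod) :=
  GRing.isLinear.Build R^c X (power {linear X -> T} T) *:%R (ev_map T X)
    (@ev_map_is_linear T X).

Lemma ev_map_inj (T X : Mod) :
  (forall x : X, (forall u : {linear X -> T}, u x = 0) -> x = 0) ->
  injective (ev_map T X).
Proof.
move=> evX; apply: raddf_inj => x ex0.
apply: evX => u; exact: (congr1 (dp_proj u) ex0).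
Qed.

Lemma cogenP (T X : Mod) :
  Cogen T X <-> forall x : X, (forall u : {linear X -> T}, u x = 0) -> x = 0.
Proof.
split=> [[I [e e_inj]] x ux|/ev_map_inj ev_inj]; last by exists {linear X -> T}, (ev_map T X).
apply: e_inj; rewrite linear0; apply: dprod_eq0 => i.
exact: (ux (dp_proj i \o e)).
Qed.

Lemma cogen_power (I : Type) (T : Mod) : Cogen T (power I T).
Proof. by exists I, idfun. Qed.

Lemma cogen_refl (T : Mod) : Cogen T T.
Proof. by apply/cogenP => t /(_ idfun). Qed.

Lemma cogen_rperp_perpL (T Y : Mod) : Cogen T Y -> rperp (perpL T) Y.
Proof.
move=> /cogenP evY X hX f x; apply: evY => u.
exact: (hX (u \o f)).
Qed.

Lemma torsion_pair_perpL_Cogen (T : Mod) :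
  (forall Y, rperp (perpL T) Y -> Cogen T Y) -> torsion_pair (perpL T) (Cogen T).
Proof.
move=> rperp_cogen; split=> X; split.
- by move=> hX Y /cogen_rperp_perpL; apply.
- by apply; apply: cogen_refl.
- exact: cogen_rperp_perpL.
- exact: rperp_cogen.
Qed.

Lemma torsion_pair_eq_free (Tc F G : mclass R) :
  (forall X, F X <-> G X) -> torsion_pair Tc F -> torsion_pair Tc G.
Proof.
move=> FG [tT tF]; split=> X.
- by rewrite tT; split=> hX Y /FG; apply: hX.
- by rewrite -FG tF.
Qed.

Definition reject (T Y : Mod) : submodule Y.
Proof.
refine (@Submodule R^c Y (fun y => forall u : {linear Y -> T}, u y = 0) _ _).
  by move=> u; rewrite linear0.
by move=> a x y ux uy u; rewrite linearP ux uy scaler0 addr0.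
Defined.

Lemma cogen_quot_reject (T Y : Mod) : Cogen T (quot (reject T Y)).
Proof.
apply/cogenP => c; have [y <- uy] := qpi_surj c; apply/qpi_eq0 => u.
have u_reject : forall z, submem (reject T Y) z -> u z = 0 by move=> z; apply.
by rewrite -(quot_liftE u_reject); apply: uy.
Qed.

End Cogenerated.

Section Copresentation.
Variable R : nzRingType.
Local Notation Mod := (lmodType R^c).
Variables (T Q0 Q1 : Mod) (iota : {linear T -> Q0}) (zeta : {linear Q0 -> Q1}).
Hypothesis exact_iota_zeta : exact_copres iota zeta.

Lemma zeta_iota t : zeta (iota t) = 0.
Proof. by apply/(proj2 exact_iota_zeta); exists t. Qed.

Lemma ker_lift (X : Mod) (g : {linear X -> Q0}) :
  (forall x, zeta (g x) = 0) -> exists w : {linear X -> T}, forall x, iota (w x) = g x.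
Proof.
have [iota_inj ker_zeta] := exact_iota_zeta.
move=> zg0; have /all_sig [w wE] : forall x, {t | iota t = g x}.
  by move=> x; apply: constructive_indefinite_description; apply/ker_zeta.
have w_lin : linear w by move=> a x y; apply: iota_inj; rewrite linearP !wE linearP.
by exists (linmap w_lin).
Qed.

Lemma B_class_sub (X Y : Mod) (e : {linear X -> Y}) :
  injective_module Q1 -> injective e -> B_class zeta Y -> B_class zeta X.
Proof.
move=> injQ1 e_inj BY g; have [g' g'E] := injQ1 _ _ e g e_inj.
have [h hE] := BY g'; exists (h \o e) => x /=.
by rewrite hE g'E.
Qed.

Lemma cogen_B_class :
  injective_module Q1 -> B_class zeta T -> closed_under_products (B_class zeta) ->
  forall X, Cogen T X -> B_class zeta X.
Proof.
move=> injQ1 BT B_prod X [I [e e_inj]]; apply: (B_class_sub injQ1 e_inj).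
exact: B_prod.
Qed.

Section Reject.
Hypothesis injQ0 : injective_module Q0.
Hypothesis cogen_B : forall X, Cogen T X -> B_class zeta X.

Lemma reject_perpL (Y : Mod) : perpL T (subm (reject T Y)).
Proof.
pose K := reject T Y; move=> f k.
have [g gE] := injQ0 (iota \o f) (@subm_val_inj _ _ K).
have zgK : forall y, submem K y -> (zeta \o g) y = 0.
  by move=> y Ky; have /= -> := gE (exist _ y Ky); rewrite zeta_iota.
have [v vE] := cogen_B (cogen_quot_reject T Y) (quot_lift zgK).
have zgv : forall y, zeta ((g \- (v \o qpi K)) y) = 0.
  by move=> y; rewrite /= linearB vE quot_liftE subrr.
have [w wE] := ker_lift zgv.
have k0 : qpi K (subm_val k) = 0 by apply/qpi_eq0/subm_valP.
have wk0 : w (subm_val k) = 0 by apply: (subm_valP k).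
apply: (proj1 exact_iota_zeta); rewrite linear0.
by have := wE (subm_val k); rewrite /= wk0 k0 !linear0 addr0 gE.
Qed.

Lemma rperp_perpL_cogen (Y : Mod) : rperp (perpL T) Y -> Cogen T Y.
Proof.
move=> hY; apply/cogenP => y uy.
exact: (hY _ (@reject_perpL Y) (@subm_val _ _ (reject T Y)) (exist _ y uy)).
Qed.

End Reject.

Section Cokernel.
Hypothesis cogen_B : forall X, Cogen T X -> B_class zeta X.

Lemma coker_ev_map_B_class (X : Mod) : B_class zeta (quot (lin_image (ev_map T X))).
Proof.
pose I := {linear X -> T}; pose N := lin_image (ev_map T X).
move=> g; have [h hE] := cogen_B (cogen_power I T) (g \o qpi N).
have hev0 : forall x, zeta ((h \o ev_map T X) x) = 0.
  move=> x; rewrite /= hE /=.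
  have -> : qpi N (ev_map T X x) = 0 by apply/qpi_eq0; exists x.
  exact: linear0.
have [k kE] := ker_lift hev0.
pose h' := h \- (iota \o @dp_proj _ _ (fun _ : I => T) k).
have h'N : forall y, submem N y -> h' y = 0.
  by move=> _ [x <-]; rewrite /h' /= -[dp_proj k _]/(k x) kE subrr.
exists (quot_lift h'N) => c; have [y <-] := qpi_surj c.
by rewrite quot_liftE /= linearB hE zeta_iota subr0.
Qed.

Lemma cogen_copres (B_cogen : forall X, B_class zeta X -> Cogen T X) (X : Mod) :
  Cogen T X -> Copres T X.
Proof.
move=> cogX; pose N := lin_image (ev_map T X).
have [J [e e_inj]] := B_cogen _ (@coker_ev_map_B_class X).
exists {linear X -> T}, J, (e \o qpi N), (ev_map T X); split; first exact/ev_map_inj/cogenP.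
move=> y; split=> [/= ey0|[x <-] /=].
- suff /qpi_eq0 : qpi N y = 0 by [].
  by apply: e_inj; rewrite ey0 linear0.
- have -> : qpi N (ev_map T X x) = 0 by apply/qpi_eq0; exists x.
  exact: linear0.
Qed.

End Cokernel.

End Copresentation.

Theorem corollary3p5 (R : nzRingType) (Q0 Q1 : lmodType R^c)
    (zeta : {linear Q0 -> Q1})
    (HQ0 : injective_module Q0) (HQ1 : injective_module Q1)
    (T : lmodType R^c) (iota : {linear T -> Q0})
    (Hker : exact_copres iota zeta) :
  (partial_cosilting T -> torsion_pair (perpL T) (Cogen T)) /\
  (cosilting_wrt T zeta <-> torsion_pair (perpL T) (B_class zeta)) /\
  (cosilting T -> forall X : lmodType R^c, Cogen T X <-> Copres T X).
Proof.
split; [|split].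
- move=> [P0 [P1 [z [[injP0 injP1 [io exact_io]] BT B_prod]]]].
  apply: torsion_pair_perpL_Cogen => Y.
  exact: (rperp_perpL_cogen exact_io injP0 (cogen_B_class injP1 BT B_prod)).
- split=> [[_ cogen_B]|[_ B_rperp]].
  + apply: (torsion_pair_eq_free cogen_B); apply: torsion_pair_perpL_Cogen => Y.
    by apply: (rperp_perpL_cogen Hker HQ0) => X /cogen_B.
  + have cogen_B X : Cogen T X -> B_class zeta X.
      by move=> /cogen_rperp_perpL /B_rperp.
    split; first by split=> //; exists iota.
    move=> X; split; first exact: cogen_B.
    by move=> /B_rperp; apply: (rperp_perpL_cogen Hker HQ0 cogen_B).
- move=> [P0 [P1 [z [[_ _ [io exact_io]] cogen_B]]]] X; split.
  + by apply: (cogen_copres exact_io) => Y /cogen_B.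
  + by move=> [I [J [g [f [f_inj _]]]]]; exists I, f.
Qed.
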